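(* Let $D=(V,A)$ be a digraph, $k\in\mathbb{N}$, and $\mathcal{B}_i=(V_i,A_i)$ $(i<k)$ pairwise edge-disjoint branchings in $D$ such that for every nonempty $X\subseteq V$, $\varrho_{D\setminus\!\setminus\mathcal{B}}(X)\geq|\{i<k:V_i\cap X=\varnothing\}|$. Then for every $w\in V$ there is a system of pairwise edge-disjoint paths $\{P_i\}_{i<k}$ in $D\setminus\!\setminus\mathcal{B}$ such that $P_i$ goes from $V_i$ to $w$ for each $i<k$.
   Context: Digraphs may be of arbitrary cardinality with multiple edges. A branching is a digraph whose weakly connected components are arborescences (directed trees in which every vertex is reachable from the root). $D\setminus\!\setminus\mathcal{B}=(V,A\setminus\bigcup_{i<k}A_i)$. $\varrho_H(X)$ is the cardinality of the set of edges of $H$ with tail outside $X$ and head in $X$. Paths are directed simple paths; a path $P$ goes from $X$ to $Y$ if $V(P)\cap X=\{\mathrm{start}(P)\}$ and $V(P)\cap Y=\{\mathrm{end}(P)\}$ (start and end may coincide). *)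

(* Digraphs of arbitrary cardinality with multiple edges:
   a vertex type V, an edge type A, and tail/head maps A -> V. *)
From Stdlib Require Import List Arith Relations ClassicalEpsilon.
Import ListNotations.
Set Implicit Arguments.

Section Digraph.
Context {V A : Type} (tail head : A -> V).

Fixpoint walk (arcs : A -> Prop) (s : V) (es : list A) (t : V) : Prop :=
  match es with
  | [] => s = t
  | e :: es' => arcs e /\ tail e = s /\ walk arcs (head e) es' t
  end.

Definition pverts (s : V) (es : list A) : list V := s :: map head es.

Definition is_path (arcs : A -> Prop) (s : V) (es : list A) (t : V) : Prop :=
  walk arcs s es t /\ NoDup (pverts s es).

Definition joins (a : A) (x y : V) : Prop :=
  (tail a = x /\ head a = y) \/ (tail a = y /\ head a = x).

Definition wadj (AB : A -> Prop) (x y : V) : Prop :=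
  exists a, AB a /\ joins a x y.

Definition wconn (AB : A -> Prop) : V -> V -> Prop := clos_refl_trans V (wadj AB).

(* an undirected cycle of the underlying multigraph of (_, AB):
   distinct edges e_0..e_{n-1}, distinct vertices v_0..v_{n-1} (n >= 1),
   e_j joins v_j and v_{j+1 mod n}  (n = 1: loop, n = 2: parallel edges) *)
Definition ucycle (AB : A -> Prop) (es : list A) (vs : list V) : Prop :=
  es <> [] /\ length es = length vs /\ NoDup es /\ NoDup vs /\
  (forall a, In a es -> AB a) /\
  (forall j a x y, nth_error es j = Some a -> nth_error vs j = Some x ->
     nth_error vs (S j mod length vs) = Some y -> joins a x y).

(* (VB, AB) is a branching: a subdigraph whose weakly connected components are
   arborescences, i.e. trees (underlying multigraph connected and acyclic) with a
   root from which every vertex of the component is reachable by a directed path. *)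
Definition is_branching (VB : V -> Prop) (AB : A -> Prop) : Prop :=
  (forall a, AB a -> VB (tail a) /\ VB (head a)) /\
  (forall es vs, ~ ucycle AB es vs) /\
  (forall x, VB x -> exists r, wconn AB x r /\
       forall y, wconn AB r y -> exists es, is_path AB r es y).

(* rho_H(X) >= m, with H given by arc set [arcs]: there are at least m distinct
   arcs of H with tail outside X and head in X *)
Definition indeg_ge (arcs : A -> Prop) (X : V -> Prop) (m : nat) : Prop :=
  exists l : list A, NoDup l /\ length l = m /\
    forall a, In a l -> arcs a /\ ~ X (tail a) /\ X (head a).

End Digraph.

Definition count_missing {V : Type} (k : nat) (Vs : nat -> V -> Prop) (X : V -> Prop) : nat :=
  length (filter (fun i => if excluded_middle_informative (forall v, Vs i v -> ~ X v)
                           then true else false) (seq 0 k)).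

(* Keep edge-disjoint trails of
   D\\B ending at w, the trail of index i starting in V_i, for distinct indices.  In the
   residual graph unused edges go forward, used edges backward, and the start x of
   trail i may be moved to any vertex of V_i.  If w is reachable from an unused index,
   augmenting along a simple residual path yields one more trail.  Otherwise let X be
   the set of vertices not reachable: every edge of D\\B entering X is used by a trail
   leaving the reachable part, which a trail does at most once and only if it starts
   there, while the indices of those trails and the unused ones all miss X; so
   rho(X) < |{i : V_i ∩ X = ∅}|, against the hypothesis.  The k trails are
   finally shortened to paths and cut at their last vertex in V_i. *)

From Stdlib Require Import List Arith Lia Classical ClassicalEpsilon.
Import ListNotations.

Definition indicator (P : Prop) : nat := if excluded_middle_informative P then 1 else 0.

Fixpoint countP {X : Type} (P : X -> Prop) (l : list X) : nat :=
  match l with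
  | [] => 0
  | x :: l' => indicator (P x) + countP P l'
  end.

Definition keep {X : Type} (P : X -> Prop) (l : list X) : list X :=
  filter (fun x => if excluded_middle_informative (P x) then true else false) l.

Section Counting.
Context {X : Type}.
Implicit Types (P Q : X -> Prop) (l m : list X).

Lemma indicator_true (P : Prop) : P -> indicator P = 1.
Proof. unfold indicator; destruct (excluded_middle_informative P); tauto. Qed.

Lemma indicator_false (P : Prop) : ~ P -> indicator P = 0.
Proof. unfold indicator; destruct (excluded_middle_informative P); tauto. Qed.

Lemma indicator_le_1 (P : Prop) : indicator P <= 1.
Proof. unfold indicator; destruct (excluded_middle_informative P); lia. Qed.

Lemma countP_app P l m : countP P (l ++ m) = countP P l + countP P m.
Proof. induction l; simpl; lia. Qed.

Lemma countP_True l : countP (fun _ => True) l = length l.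
Proof. induction l; simpl; auto. rewrite indicator_true; auto. Qed.

Lemma countP_pos P l : 0 < countP P l -> exists x, In x l /\ P x.
Proof.
  induction l as [|x l IH]; simpl; intro H; [lia|].
  destruct (classic (P x)) as [Hx|Hx]; [eauto|].
  rewrite indicator_false in H by auto. destruct (IH H) as [y [? ?]]; eauto.
Qed.

Lemma countP_pos_of P l x : In x l -> P x -> 0 < countP P l.
Proof.
  induction l as [|y l IH]; simpl; intros Hx HP; [destruct Hx|].
  destruct Hx as [->|Hx]; [rewrite indicator_true by auto; lia|specialize (IH Hx HP); lia].
Qed.

Lemma countP_or P Q l :
  (forall x, In x l -> P x -> Q x -> False) ->
  countP (fun x => P x \/ Q x) l = countP P l + countP Q l.
Proof.
  induction l as [|x l IH]; simpl; intro H; auto.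
  rewrite IH by (intros y Hy; apply H; simpl; auto). unfold indicator.
  destruct (excluded_middle_informative (P x \/ Q x)),
    (excluded_middle_informative (P x)), (excluded_middle_informative (Q x));
    solve [lia | exfalso; firstorder].
Qed.

Lemma countP_ext_in P Q l :
  (forall x, In x l -> (P x <-> Q x)) -> countP P l = countP Q l.
Proof.
  induction l as [|x l IH]; simpl; intro H; auto.
  rewrite IH by (intros y Hy; apply H; simpl; auto). unfold indicator.
  destruct (excluded_middle_informative (P x)), (excluded_middle_informative (Q x));
    firstorder.
Qed.

Lemma countP_split P Q l :
  countP P l = countP (fun x => P x /\ Q x) l + countP (fun x => P x /\ ~ Q x) l.
Proof.
  rewrite <- countP_or by tauto. apply countP_ext_in.
  intros x _. destruct (classic (Q x)); tauto.
Qed.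

Lemma In_keep P l x : In x (keep P l) <-> In x l /\ P x.
Proof.
  unfold keep. rewrite filter_In.
  destruct (excluded_middle_informative (P x)); intuition congruence.
Qed.

Lemma NoDup_keep P l : NoDup l -> NoDup (keep P l).
Proof. apply NoDup_filter. Qed.

Lemma NoDup_map_keep {Y : Type} (f : X -> Y) P l :
  NoDup (map f l) -> NoDup (map f (keep P l)).
Proof.
  induction l as [|x l IH]; simpl; intro H; auto. inversion H as [|? ? Hx Hl]; subst.
  unfold keep; simpl; fold (keep P l).
  destruct (excluded_middle_informative (P x)); simpl; auto.
  constructor; auto. intro Hin. apply Hx.
  apply in_map_iff in Hin as [y [<- Hy]]. apply In_keep in Hy. apply in_map; tauto.
Qed.

Lemma countP_keep P Q l : countP P (keep Q l) = countP (fun x => P x /\ Q x) l.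
Proof.
  induction l as [|x l IH]; simpl; auto. unfold keep; simpl; fold (keep Q l).
  destruct (excluded_middle_informative (Q x)); simpl; unfold indicator;
    destruct (excluded_middle_informative (P x)),
      (excluded_middle_informative (P x /\ Q x)); solve [lia | tauto].
Qed.

Lemma length_keep P l : length (keep P l) = countP P l.
Proof. rewrite <- countP_True, countP_keep. apply countP_ext_in. tauto. Qed.

Lemma NoDup_length_le_countP P l m :
  NoDup l -> (forall x, In x l -> In x m /\ P x) -> length l <= countP P m.
Proof.
  intros Hl H. rewrite <- length_keep. apply NoDup_incl_length; auto.
  intros x Hx. apply In_keep, H, Hx.
Qed.

Lemma countP_unique P Q l e :
  NoDup l -> In e l -> Q e -> (forall x, In x l -> Q x -> x = e) ->
  countP (fun x => P x /\ Q x) l = indicator (P e).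
Proof.
  induction l as [|x l IH]; simpl; intros Hn He HQ Hu; [destruct He|].
  inversion Hn as [|? ? Hx Hl]; subst.
  destruct He as [->|He].
  - replace (countP (fun x => P x /\ Q x) l) with 0.
    + rewrite Nat.add_0_r. unfold indicator.
      destruct (excluded_middle_informative (P e /\ Q e)),
        (excluded_middle_informative (P e)); tauto.
    + symmetry. destruct (Nat.eq_0_gt_0_cases (countP (fun x => P x /\ Q x) l))
        as [|Hpos]; auto.
      destruct (countP_pos _ _ Hpos) as [y [Hy [_ Hqy]]].
      destruct Hx. rewrite <- (Hu y); auto.
  - rewrite indicator_false.
    + apply IH; auto.
    + intros [_ Hqx]. destruct Hx. rewrite (Hu x); auto.
Qed.

Lemma countP_remove_unique P Q l e :
  NoDup l -> In e l -> Q e -> (forall x, In x l -> Q x -> x = e) ->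
  countP P l = countP P (keep (fun x => ~ Q x) l) + indicator (P e).
Proof.
  intros. rewrite (countP_split P Q l), countP_keep, (countP_unique P Q l e); auto. lia.
Qed.

Lemma countP_in_sublist P l m :
  NoDup l -> NoDup m -> incl l m -> countP (fun x => P x /\ In x l) m = countP P l.
Proof.
  induction l as [|t l IH]; intros Hl Hm Hlm.
  - clear. induction m as [|x m IH]; simpl; auto. rewrite indicator_false by tauto; auto.
  - inversion Hl as [|? ? Ht Hl']; subst. simpl.
    rewrite (countP_ext_in _ (fun x => (P x /\ x = t) \/ (P x /\ In x l)))
      by (simpl; firstorder congruence).
    rewrite countP_or by (intros x _ [_ ->] [_ ?]; auto).
    rewrite (countP_unique P (fun x => x = t) m t), IH; auto.
    + intros x Hx; apply Hlm; simpl; auto.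
    + apply Hlm; simpl; auto.
Qed.

Lemma countP_remove_sublist P l m :
  NoDup l -> NoDup m -> incl l m ->
  countP P m = countP P (keep (fun x => ~ In x l) m) + countP P l.
Proof.
  intros. rewrite (countP_split P (fun x => In x l) m), countP_keep, countP_in_sublist; auto.
  lia.
Qed.

Lemma countP_concat_le {Y : Type} P (Q : Y -> Prop) (f : Y -> list X) (L : list Y) :
  (forall y, In y L -> countP P (f y) <= indicator (Q y)) ->
  countP P (concat (map f L)) <= countP Q L.
Proof.
  induction L as [|y L IH]; simpl; intro H; [lia|]. rewrite countP_app.
  specialize (H y (or_introl eq_refl)) as Hy. specialize (IH (fun z Hz => H z (or_intror Hz))).
  lia.
Qed.

Lemma NoDup_map_injective_on {Y : Type} (f : X -> Y) l x y :
  NoDup (map f l) -> In x l -> In y l -> f x = f y -> x = y.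
Proof.
  induction l as [|z l IH]; simpl; intros Hn Hx Hy Hf; [destruct Hx|].
  inversion Hn as [|? ? Hz Hl]; subst.
  destruct Hx as [<-|Hx], Hy as [<-|Hy]; auto.
  - destruct Hz. rewrite Hf. apply in_map, Hy.
  - destruct Hz. rewrite <- Hf. apply in_map, Hx.
Qed.

Lemma NoDup_app_disjoint l m x : NoDup (l ++ m) -> In x l -> In x m -> False.
Proof.
  intros Hn Hl Hm. apply in_split in Hm as [m1 [m2 ->]].
  rewrite app_assoc in Hn. apply NoDup_remove_2 in Hn. apply Hn, in_or_app. left.
  apply in_or_app. auto.
Qed.

Lemma NoDup_concat_disjoint {Y : Type} (f : Y -> list X) (L : list Y) y1 y2 x :
  NoDup (concat (map f L)) -> In y1 L -> In y2 L -> y1 <> y2 ->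
  In x (f y1) -> In x (f y2) -> False.
Proof.
  induction L as [|y L IH]; simpl; intros Hn H1 H2 Hne Hx1 Hx2; [destruct H1|].
  assert (Hin : forall z, In z L -> In x (f z) -> In x (concat (map f L)))
    by (intros z Hz Hxz; apply in_concat; exists (f z); split; auto; apply in_map, Hz).
  destruct H1 as [<-|H1], H2 as [<-|H2].
  - contradiction.
  - exact (NoDup_app_disjoint _ _ x Hn Hx1 (Hin y2 H2 Hx2)).
  - exact (NoDup_app_disjoint _ _ x Hn Hx2 (Hin y1 H1 Hx1)).
  - exact (IH (NoDup_app_remove_l _ _ Hn) H1 H2 Hne Hx1 Hx2).
Qed.

End Counting.

Fixpoint chain {N : Type} (r : N -> N -> Prop) (x : N) (zs : list N) : Prop :=
  match zs with
  | [] => True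
  | y :: ys => r x y /\ chain r y ys
  end.

Section Chains.
Context {N : Type} (r : N -> N -> Prop).

Lemma last_cons_default (x y : N) ys : last (y :: ys) x = last ys y.
Proof.
  revert x y; induction ys as [|z ys IH]; intros x y; [reflexivity|].
  change (last (z :: ys) x = last (z :: ys) y). rewrite !IH. reflexivity.
Qed.

Lemma chain_rcons x zs y :
  chain r x zs -> r (last zs x) y -> chain r x (zs ++ [y]).
Proof.
  revert x; induction zs as [|z zs IH]; intros x Hc Hr; [split; auto|].
  destruct Hc as [Hxz Hc]. split; auto.
  apply IH; auto. rewrite <- (last_cons_default x). exact Hr.
Qed.

Lemma chain_from_member y ws x :
  chain r y ws -> NoDup (y :: ws) -> In x (y :: ws) ->
  exists ws', chain r x ws' /\ last ws' x = last ws y /\ NoDup (x :: ws').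
Proof.
  revert y; induction ws as [|z ws IH]; intros y Hc Hn Hx.
  - destruct Hx as [<-|[]]. exists []. auto.
  - destruct Hx as [<-|Hx]; [exists (z :: ws); auto|].
    inversion Hn; subst. destruct (IH z) as [ws' H]; try apply Hc; auto.
    exists ws'. rewrite last_cons_default. auto.
Qed.

Lemma chain_simple x zs :
  chain r x zs -> exists zs', chain r x zs' /\ last zs' x = last zs x /\ NoDup (x :: zs').
Proof.
  revert x; induction zs as [|y ys IH]; intros x Hc.
  - exists []. repeat constructor; auto.
  - destruct Hc as [Hr Hc]. destruct (IH y Hc) as [zs [H1 [H2 H3]]].
    rewrite last_cons_default, <- H2.
    destruct (classic (In x (y :: zs))) as [Hx|Hx].
    + exact (chain_from_member y zs x H1 H3 Hx).
    + exists (y :: zs). rewrite last_cons_default. repeat split; auto. constructor; auto.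
Qed.

End Chains.

Section Walks.
Context {V A : Type} (tail head : A -> V).
Implicit Types (arcs : A -> Prop) (R : V -> Prop).

Lemma walk_mono arcs arcs' s es t :
  (forall a, arcs a -> arcs' a) -> walk tail head arcs s es t -> walk tail head arcs' s es t.
Proof. revert s; induction es; simpl; intros s H Hw; intuition. Qed.

Lemma walk_arcs arcs s es t : walk tail head arcs s es t -> forall a, In a es -> arcs a.
Proof.
  revert s; induction es as [|e es IH]; simpl; intros s Hw a Ha; [destruct Ha|].
  destruct Hw as [? [? ?]]. destruct Ha; subst; eauto.
Qed.

Lemma path_suffix arcs x es t s :
  is_path tail head arcs x es t -> In s (pverts head x es) ->
  exists es', is_path tail head arcs s es' t /\ incl es' es.
Proof.
  unfold is_path, pverts. revert x; induction es as [|e es IH]; intros x [Hw Hn] Hs.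
  - destruct Hs as [<-|[]]. exists []. split; [split|]; auto. intros a [].
  - destruct Hs as [<-|Hs]; [exists (e :: es); split; [split|]; auto; intros a; auto|].
    destruct Hw as [_ [_ Hw]]. inversion Hn; subst.
    destruct (IH (head e)) as [es' [Hp Hi]]; auto.
    exists es'. split; auto. intros a Ha. right; auto.
Qed.

Lemma walk_to_path arcs s es t :
  walk tail head arcs s es t -> exists es', is_path tail head arcs s es' t /\ incl es' es.
Proof.
  revert s; induction es as [|e es IH]; intros s Hw.
  - exists []. split; [split; [auto|repeat constructor; auto]|]. intros a [].
  - destruct Hw as [He [Ht Hw]]. destruct (IH _ Hw) as [es2 [H1 H2]].
    destruct (classic (In s (pverts head (head e) es2))) as [Hs|Hs].
    + destruct (path_suffix arcs (head e) es2 t s H1 Hs) as [es3 [H3 H4]].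
      exists es3. split; auto. intros a Ha. right. apply H2, H4, Ha.
    + exists (e :: es2). split.
      * split; [simpl; split; [|split]; auto; apply H1|].
        constructor; auto. apply H1.
      * intros a [<-|Ha]; [left|right]; auto.
Qed.

Lemma path_from_last_visit (Q : V -> Prop) arcs s es t :
  is_path tail head arcs s es t -> (exists v, In v (pverts head s es) /\ Q v) ->
  exists s' es', is_path tail head arcs s' es' t /\ Q s' /\
    (forall v, In v (pverts head s' es') -> Q v -> v = s') /\ incl es' es.
Proof.
  revert s; induction es as [|e es IH]; intros s Hp [v [Hv Hq]].
  - destruct Hv as [<-|[]]. exists s, []. split; auto. split; auto. split.
    + intros v' [<-|[]]; auto.
    + intros a [].
  - destruct Hp as [[He [Ht Hw]] Hn]. unfold pverts in Hn. simpl in Hn.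
    inversion Hn; subst.
    destruct (classic (exists v, In v (pverts head (head e) es) /\ Q v)) as [Hex|Hnex].
    + assert (Hp : is_path tail head arcs (head e) es t) by (split; auto).
      destruct (IH (head e) Hp Hex) as [s' [es' [K1 [K2 [K3 K4]]]]].
      exists s', es'. do 3 (split; auto). intros a Ha; right; auto.
    + exists (tail e), (e :: es). split; [split; simpl; auto|].
      split; [destruct Hv as [<-|Hv]; auto; exfalso; eauto|].
      split; [|intros a Ha; auto].
      intros v' [<-|Hv'] Hq'; auto. exfalso; eauto.
Qed.

Lemma walk_exits_le R arcs u T t :
  walk tail head arcs u T t -> (forall e, In e T -> R (head e) -> R (tail e)) ->
  countP (fun e => R (tail e) /\ ~ R (head e)) T <= indicator (R u).
Proof.
  revert u; induction T as [|e T IH]; intros u Hw Hb; simpl; [lia|].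
  destruct Hw as [_ [Ht Hw]]. subst u.
  specialize (IH (head e) Hw (fun e' He' => Hb e' (or_intror He'))).
  destruct (classic (R (head e))) as [Hh|Hh].
  - rewrite indicator_false by tauto. rewrite indicator_true in IH by auto.
    rewrite indicator_true by (apply Hb; simpl; auto). lia.
  - rewrite indicator_false in IH by auto. pose proof (indicator_le_1 (R (tail e) /\ ~ R (head e))).
    unfold indicator at 2. destruct (excluded_middle_informative (R (tail e))) as [Ht|Ht].
    + lia.
    + rewrite indicator_false by tauto. lia.
Qed.

End Walks.

Section Flows.
Context {V A : Type} (tail head : A -> V) (w : V).

Definition indeg (F : list A) (y : V) : nat := countP (fun a => head a = y) F.
Definition outdeg (F : list A) (y : V) : nat := countP (fun a => tail a = y) F.
Definition srcdeg {I : Type} (S : list (I * V)) (y : V) : nat := countP (fun p => snd p = y) S.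

Lemma walk_balance arcs u T y :
  walk tail head arcs u T w -> y <> w -> indeg T y + indicator (u = y) = outdeg T y.
Proof.
  unfold indeg, outdeg. revert u; induction T as [|e T IH]; simpl; intros u Hw Hy.
  - subst. rewrite indicator_false; auto.
  - destruct Hw as [_ [<- Hw]]. specialize (IH _ Hw Hy). lia.
Qed.

Lemma trail_of_surplus F u :
  NoDup F -> (forall y, y <> w -> indeg F y + indicator (u = y) <= outdeg F y) ->
  exists T, walk tail head (fun a => In a F) u T w /\ NoDup T.
Proof.
  remember (length F) as n eqn:Hn. revert F u Hn.
  induction n as [n IH] using lt_wf_ind; intros F u Hn HF Hbal.
  destruct (classic (u = w)) as [->|Hu]; [exists []; split; [reflexivity|constructor]|].
  assert (Hout : 0 < outdeg F u).
  { specialize (Hbal u Hu). rewrite indicator_true in Hbal; auto. lia. }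
  destruct (countP_pos _ _ Hout) as [e [He Hte]].
  set (F' := keep (fun a => a <> e) F).
  assert (Hsplit : forall P, countP P F = countP P F' + indicator (P e)).
  { intro P. apply (countP_remove_unique P (fun a => a = e)); auto. }
  destruct (IH (length F')) with (F := F') (u := head e) as [T [HT HTn]]; auto.
  - subst n. rewrite <- !countP_True, (Hsplit (fun _ => True)), indicator_true; auto. lia.
  - apply NoDup_keep; auto.
  - intros y Hy. specialize (Hbal y Hy). unfold indeg, outdeg in *.
    rewrite (Hsplit (fun a => head a = y)), (Hsplit (fun a => tail a = y)), Hte in Hbal. lia.
  - assert (HF' : forall a, In a F' -> In a F /\ a <> e)
      by (intros a Ha; exact (proj1 (In_keep _ _ _) Ha)).
    exists (e :: T). split.
    + split; [auto|split; auto].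
      apply (walk_mono tail head _ _ _ _ _ (fun a Ha => proj1 (HF' a Ha)) HT).
    + constructor; auto. intro HeT.
      apply (HF' e (walk_arcs tail head _ _ _ _ HT e HeT)). reflexivity.
Qed.

Lemma trail_decomposition {I : Type} arcs (S : list (I * V)) F :
  NoDup F -> (forall a, In a F -> arcs a) ->
  (forall y, y <> w -> indeg F y + srcdeg S y <= outdeg F y) ->
  exists L : list ((I * V) * list A), map fst L = S /\ NoDup (concat (map snd L)) /\
    incl (concat (map snd L)) F /\
    forall p, In p L -> walk tail head arcs (snd (fst p)) (snd p) w.
Proof.
  revert F; induction S as [|[i u] S IH]; intros F Hn Harcs Hbal.
  - exists []. repeat split; simpl; auto using NoDup_nil. intros a []. intros p [].
  - destruct (trail_of_surplus F u) as [T [HT HTn]]; auto.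
    { intros y Hy. specialize (Hbal y Hy). unfold srcdeg in Hbal. simpl in Hbal. lia. }
    assert (HTF : incl T F) by exact (walk_arcs tail head _ _ _ _ HT).
    set (F' := keep (fun a => ~ In a T) F).
    assert (HF' : forall a, In a F' <-> In a F /\ ~ In a T)
      by (intro a; exact (In_keep _ _ _)).
    assert (Hsplit : forall P, countP P F = countP P F' + countP P T)
      by (intro P; apply countP_remove_sublist; auto).
    destruct (IH F') as [L [E1 [E2 [E3 E4]]]].
    + apply NoDup_keep; auto.
    + intros a Ha. apply Harcs, HF', Ha.
    + intros y Hy. specialize (Hbal y Hy). pose proof (walk_balance _ _ _ y HT Hy).
      unfold indeg, outdeg, srcdeg in *. simpl in Hbal.
      rewrite (Hsplit (fun a => head a = y)), (Hsplit (fun a => tail a = y)) in Hbal. lia.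
    + exists (((i, u), T) :: L). simpl. split; [congruence|split; [|split]].
      * apply NoDup_app; auto. intros a Ha Hb. apply E3, HF' in Hb. tauto.
      * intros a Ha. apply in_app_or in Ha as [Ha|Ha]; [auto|apply HF', E3, Ha].
      * intros p [<-|Hp]; auto. apply (walk_mono tail head _ _ _ _ _ Harcs HT).
Qed.

Lemma trails_balance {I : Type} arcs (L : list ((I * V) * list A)) :
  (forall p, In p L -> walk tail head arcs (snd (fst p)) (snd p) w) ->
  forall y, y <> w ->
  indeg (concat (map snd L)) y + srcdeg (map fst L) y = outdeg (concat (map snd L)) y.
Proof.
  induction L as [|p L IH]; intros HL y Hy; [reflexivity|].
  unfold indeg, outdeg, srcdeg in *. simpl. rewrite !countP_app.
  pose proof (walk_balance _ _ _ y (HL p (or_introl eq_refl)) Hy). unfold indeg, outdeg in *.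
  specialize (IH (fun q Hq => HL q (or_intror Hq)) y Hy). lia.
Qed.

End Flows.

Section Linkage.
Context {V A : Type} (tail head : A -> V) (arcs : A -> Prop) (k : nat)
  (Vs : nat -> V -> Prop) (w : V).

(* An entry ((i, x), T) is a trail T from x in [Vs i] to [w]. *)
Definition trail_system (L : list ((nat * V) * list A)) : Prop :=
  (forall p, In p L -> fst (fst p) < k /\ Vs (fst (fst p)) (snd (fst p)) /\
     walk tail head arcs (snd (fst p)) (snd p) w) /\
  NoDup (map fst (map fst L)) /\ NoDup (concat (map snd L)).

(* Nodes [inr i] stand for the source sets [Vs i]; the arc [inl x -> inr i] lets an
   augmenting path reroute trail [i], currently starting at [x], to another vertex of [Vs i]. *)
Definition residual (F0 : list A) (S0 : list (nat * V)) (z z' : V + nat) : Prop :=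
  match z, z' with
  | inl x, inl y => exists e, (arcs e /\ ~ In e F0 /\ tail e = x /\ head e = y) \/
                              (In e F0 /\ head e = x /\ tail e = y)
  | inl x, inr i => In (i, x) S0
  | inr i, inl v => i < k /\ Vs i v
  | inr _, inr _ => False
  end.

Definition reachable (F0 : list A) (S0 : list (nat * V)) (z : V + nat) : Prop :=
  exists i zs, i < k /\ ~ In i (map fst S0) /\ chain (residual F0 S0) (inr i) zs /\
    last zs (inr i) = z.

(* A flow to [w] is given by its used edges [F] and its sources [S], each paired with an
   index; conservation at [y <> w] reads [indeg F y + srcdeg S y = outdeg F y]. *)
Definition flow_valid (F : list A) (S : list (nat * V)) : Prop :=
  NoDup F /\ (forall a, In a F -> arcs a) /\ (forall i v, In (i, v) S -> i < k /\ Vs i v) /\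
  NoDup (map fst S).

(* At a vertex node one unit of inflow is still to be pushed on; at an index node the
   flow is balanced and the index is free for a new trail. *)
Definition excess_at (z : V + nat) (F : list A) (S : list (nat * V)) : Prop :=
  match z with
  | inl x => forall y, y <> w -> indeg head F y + srcdeg S y = outdeg tail F y + indicator (x = y)
  | inr i => (forall y, y <> w -> indeg head F y + srcdeg S y = outdeg tail F y) /\
             i < k /\ ~ In i (map fst S)
  end.

(* Beyond the current node [z] of a simple augmenting path, (F, S) still agrees with
   (F0, S0); the source entry of an index node [z] has already been removed. *)
Definition untouched (F0 : list A) (S0 : list (nat * V)) (z : V + nat) (zs : list (V + nat))
  (F : list A) (S : list (nat * V)) : Prop :=
  (forall e, In (inl (tail e)) (z :: zs) -> In e F -> In e F0) /\
  (forall e, In (inl (head e)) (z :: zs) -> In e F0 -> In e F) /\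
  (forall j v, In (inr j) zs -> In (j, v) S0 -> In (j, v) S).

Definition source_node (z : V + nat) : nat := match z with inl _ => 0 | inr _ => 1 end.

Section Augmentation.
Variables (F0 : list A) (S0 : list (nat * V)).

Lemma push_forward e zs F S :
  arcs e -> ~ In e F0 -> NoDup (inl (tail e) :: inl (head e) :: zs) ->
  untouched F0 S0 (inl (tail e)) (inl (head e) :: zs) F S -> flow_valid F S ->
  excess_at (inl (tail e)) F S ->
  flow_valid (e :: F) S /\ excess_at (inl (head e)) (e :: F) S /\
  untouched F0 S0 (inl (head e)) zs (e :: F) S.
Proof.
  intros Harc HeF0 Hn [U1 [U2 U3]] [HF [HFa HS]] Hex.
  inversion Hn as [|? ? Hx _]; subst.
  assert (HeF : ~ In e F) by (intro HeF; apply HeF0, U1; simpl; auto).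
  split; [|split].
  - split; [constructor; auto|split; auto]. intros a [<-|Ha]; auto.
  - intros y Hy. specialize (Hex y Hy). unfold indeg, outdeg in *. simpl. lia.
  - split; [|split].
    + intros e' Ht [<-|He']; [contradiction|]. apply U1; simpl; auto.
    + intros e' Hh He'. right. apply U2; simpl; auto.
    + intros j v Hj. apply U3; simpl; auto.
Qed.

Lemma push_backward e zs F S :
  In e F0 -> NoDup (inl (head e) :: inl (tail e) :: zs) ->
  untouched F0 S0 (inl (head e)) (inl (tail e) :: zs) F S -> flow_valid F S ->
  excess_at (inl (head e)) F S ->
  flow_valid (keep (fun a => a <> e) F) S /\
  excess_at (inl (tail e)) (keep (fun a => a <> e) F) S /\
  untouched F0 S0 (inl (tail e)) zs (keep (fun a => a <> e) F) S.
Proof.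
  intros HeF0 Hn [U1 [U2 U3]] [HF [HFa HS]] Hex.
  inversion Hn as [|? ? Hx _]; subst.
  assert (HeF : In e F) by (apply U2; simpl; auto).
  assert (Hsplit : forall P, countP P F = countP P (keep (fun a => a <> e) F) + indicator (P e))
    by (intro P; apply (countP_remove_unique P (fun a => a = e)); auto).
  split; [|split].
  - split; [apply NoDup_keep; auto|split; auto].
    intros a Ha. apply In_keep in Ha. apply HFa; tauto.
  - intros y Hy. specialize (Hex y Hy). unfold indeg, outdeg in *.
    rewrite (Hsplit (fun a => head a = y)), (Hsplit (fun a => tail a = y)) in Hex. lia.
  - split; [|split].
    + intros e' Ht He'. apply In_keep in He'. apply U1; simpl; tauto.
    + intros e' Hh He'. apply In_keep. split; [apply U2; simpl; auto|].
      intros ->. contradiction.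
    + intros j v Hj. apply U3; simpl; auto.
Qed.

Lemma reroute_source x j zs F S :
  In (j, x) S0 -> NoDup (inl x :: inr j :: zs) ->
  untouched F0 S0 (inl x) (inr j :: zs) F S -> flow_valid F S -> excess_at (inl x) F S ->
  flow_valid F (keep (fun p => fst p <> j) S) /\
  excess_at (inr j) F (keep (fun p => fst p <> j) S) /\
  untouched F0 S0 (inr j) zs F (keep (fun p => fst p <> j) S) /\
  length S = 1 + length (keep (fun p => fst p <> j) S).
Proof.
  intros HjS0 Hn [U1 [U2 U3]] [HF [HFa [HS HSn]]] Hex.
  inversion Hn as [|? ? _ Hn']; inversion Hn' as [|? ? Hj _]; subst.
  assert (HjS : In (j, x) S) by (apply U3; simpl; auto).
  assert (Hsplit : forall P, countP P S =
                   countP P (keep (fun p => fst p <> j) S) + indicator (P (j, x))).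
  { intro P. apply (countP_remove_unique P (fun p => fst p = j)); auto.
    - exact (NoDup_map_inv _ _ HSn).
    - intros p Hp Hpj. apply (NoDup_map_injective_on fst S); auto. }
  split; [|split; [|split]].
  - split; [auto|split; [auto|split]].
    + intros i v Hi. apply In_keep in Hi. apply HS; tauto.
    + apply NoDup_map_keep; auto.
  - split; [|split; [apply (HS j x HjS)|]].
    + intros y Hy. specialize (Hex y Hy). unfold srcdeg in *.
      rewrite (Hsplit (fun p => snd p = y)) in Hex. simpl in Hex. lia.
    + intro Hin. apply in_map_iff in Hin as [p [Hp Hin]]. apply In_keep in Hin. tauto.
  - split; [|split].
    + intros e He. apply U1. simpl in *. tauto.
    + intros e He. apply U2. simpl in *. tauto.
    + intros j' v Hj' Hv. apply In_keep. split; [apply U3; simpl; auto|].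
      simpl. intros ->. contradiction.
  - rewrite <- !countP_True, (Hsplit (fun _ => True)), indicator_true; auto. lia.
Qed.

Lemma restart_source i y zs F S :
  i < k -> Vs i y -> untouched F0 S0 (inr i) (inl y :: zs) F S -> flow_valid F S ->
  excess_at (inr i) F S ->
  flow_valid F ((i, y) :: S) /\ excess_at (inl y) F ((i, y) :: S) /\
  untouched F0 S0 (inl y) zs F ((i, y) :: S).
Proof.
  intros Hi Hy [U1 [U2 U3]] [HF [HFa [HS HSn]]] [Hbal [_ Hfree]].
  split; [|split].
  - split; [auto|split; [auto|split]].
    + intros j v [E|Hj]; [injection E as <- <-; auto|auto].
    + constructor; auto.
  - intros y' Hy'. specialize (Hbal y' Hy'). unfold srcdeg in *. simpl. lia.
  - split; [|split].
    + intros e He. apply U1. simpl in *. tauto.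
    + intros e He. apply U2. simpl in *. tauto.
    + intros j v Hj Hv. right. apply U3; simpl; auto.
Qed.

Lemma augment_step z z' zs F S :
  residual F0 S0 z z' -> NoDup (z :: z' :: zs) -> untouched F0 S0 z (z' :: zs) F S ->
  flow_valid F S -> excess_at z F S ->
  exists F1 S1, flow_valid F1 S1 /\ excess_at z' F1 S1 /\ untouched F0 S0 z' zs F1 S1 /\
    length S1 + source_node z' = length S + source_node z.
Proof.
  intros Hr Hn HU HV Hex.
  destruct z as [x|i], z' as [y|j]; simpl in Hr.
  - destruct Hr as [e [[Harc [HeF0 [<- <-]]] | [HeF0 [<- <-]]]].
    + exists (e :: F), S. destruct (push_forward e zs F S) as [? [? ?]]; auto.
    + exists (keep (fun a => a <> e) F), S.
      destruct (push_backward e zs F S) as [? [? ?]]; auto.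
  - exists F, (keep (fun p => fst p <> j) S).
    destruct (reroute_source x j zs F S) as [? [? [? Hlen]]]; auto.
    do 3 (split; auto). simpl. lia.
  - destruct Hr as [Hi Hy]. exists F, ((i, y) :: S).
    destruct (restart_source i y zs F S) as [? [? ?]]; auto.
  - destruct Hr.
Qed.

Lemma augment_along zs z F S :
  chain (residual F0 S0) z zs -> last zs z = inl w -> NoDup (z :: zs) ->
  untouched F0 S0 z zs F S -> flow_valid F S -> excess_at z F S ->
  exists F' S', flow_valid F' S' /\
    (forall y, y <> w -> indeg head F' y + srcdeg S' y <= outdeg tail F' y) /\
    length S' = length S + source_node z.
Proof.
  revert z F S; induction zs as [|z' zs IH]; intros z F S Hc Hl Hn HU HV Hex.
  - simpl in Hl. subst z. exists F, S. split; [auto|split; [|simpl; lia]].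
    intros y Hy. rewrite (Hex y Hy), indicator_false; [lia|congruence].
  - destruct Hc as [Hr Hc]. rewrite last_cons_default in Hl.
    destruct (augment_step z z' zs F S) as [F1 [S1 [HV1 [Hex1 [HU1 Hlen]]]]]; auto.
    destruct (IH z' F1 S1) as [F' [S' [? [? ?]]]]; auto.
    + inversion Hn; auto.
    + exists F', S'. split; [auto|split; [auto|lia]].
Qed.

End Augmentation.

Lemma trail_system_flow_valid L :
  trail_system L -> flow_valid (concat (map snd L)) (map fst L).
Proof.
  intros [HL [HLi HLe]]. split; [auto|split; [|split; [|auto]]].
  - intros a Ha. apply in_concat in Ha as [T [HT Ha]]. apply in_map_iff in HT as [p [<- Hp]].
    exact (walk_arcs tail head _ _ _ _ (proj2 (proj2 (HL p Hp))) a Ha).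
  - intros i v Hiv. apply in_map_iff in Hiv as [p [Hp HpL]].
    destruct (HL p HpL) as [? [? _]]. rewrite Hp in *. auto.
Qed.

Lemma augment_system L :
  trail_system L -> reachable (concat (map snd L)) (map fst L) (inl w) ->
  exists L', trail_system L' /\ length L' = S (length L).
Proof.
  intros HL [i0 [zs [Hi0 [Hfree [Hc Hl]]]]].
  set (F0 := concat (map snd L)) in *. set (S0 := map fst L) in *.
  destruct (chain_simple _ _ _ Hc) as [zs' [Hc' [Hl' Hn]]]. rewrite Hl in Hl'.
  assert (Hex : excess_at (inr i0) F0 S0).
  { split; [|auto]. apply trails_balance with (arcs := arcs). apply HL. }
  destruct (augment_along F0 S0 zs' (inr i0) F0 S0) as [F' [S' [HV' [Hbal Hlen]]]]; auto.
  { split; [|split]; auto. }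
  { apply trail_system_flow_valid, HL. }
  destruct HV' as [HF' [HFa' [HS' HSn']]].
  destruct (trail_decomposition tail head w arcs S' F') as [L' [E1 [E2 [_ E4]]]]; auto.
  exists L'. split; [split; [|split]|].
  - intros [[i v] T] Hp. assert (Hiv : In (i, v) S') by (rewrite <- E1; apply (in_map fst _ _ Hp)).
    destruct (HS' i v Hiv). split; [|split]; auto.
  - rewrite E1. auto.
  - auto.
  - rewrite <- (length_map fst L'), E1, Hlen. unfold S0. rewrite length_map. simpl. lia.
Qed.

Lemma reachable_succ F0 S0 z z' :
  reachable F0 S0 z -> residual F0 S0 z z' -> reachable F0 S0 z'.
Proof.
  intros [i [zs [Hi [Hfree [Hc <-]]]]] Hr. exists i, (zs ++ [z']).
  repeat split; auto using chain_rcons, last_last.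
Qed.

Lemma reachable_free F0 S0 i : i < k -> ~ In i (map fst S0) -> reachable F0 S0 (inr i).
Proof. intros Hi Hfree. exists i, []. simpl. auto. Qed.

Lemma trail_exits_le L (R : V -> Prop) :
  trail_system L -> (forall e, In e (concat (map snd L)) -> R (head e) -> R (tail e)) ->
  countP (fun e => R (tail e) /\ ~ R (head e)) (concat (map snd L)) <=
  countP (fun p => R (snd (fst p))) L.
Proof.
  intros [HL _] Hback. apply countP_concat_le. intros p Hp.
  apply (walk_exits_le tail head R arcs _ _ w); [apply HL, Hp|].
  intros e He. apply Hback, in_concat. exists (snd p). split; auto. apply in_map, Hp.
Qed.

Lemma free_index_exists L :
  trail_system L -> length L < k -> 0 < countP (fun i => ~ In i (map fst (map fst L))) (seq 0 k).
Proof.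
  intros [HL _] Hlt.
  destruct (classic (exists i, In i (seq 0 k) /\ ~ In i (map fst (map fst L)))) as [[i [? ?]]|Hno].
  - apply (countP_pos_of _ _ i); auto.
  - exfalso. assert (Hincl : incl (seq 0 k) (map fst (map fst L))).
    { intros i Hi. apply NNPP. intro; apply Hno; eauto. }
    apply (NoDup_incl_length (seq_NoDup k 0)) in Hincl.
    rewrite length_seq, !length_map in Hincl. lia.
Qed.

Section Cut.
Variable L : list ((nat * V) * list A).
Hypothesis HL : trail_system L.
Let R (v : V) : Prop := reachable (concat (map snd L)) (map fst L) (inl v).

Lemma source_set_reachable i v :
  i < k -> reachable (concat (map snd L)) (map fst L) (inr i) -> Vs i v -> R v.
Proof. intros Hi Hr Hv. apply (reachable_succ _ _ _ _ Hr). simpl. auto. Qed.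

Lemma reachable_starts_lt_missing :
  length L < k -> countP (fun p => R (snd (fst p))) L < count_missing k Vs (fun v => ~ R v).
Proof.
  intros Hlt. pose proof (free_index_exists L HL Hlt) as Hfree.
  destruct HL as [HLp [HLi _]]. set (I0 := map fst (map fst L)) in *.
  set (used := map (fun p => fst (fst p)) (keep (fun p => R (snd (fst p))) L)).
  set (free := keep (fun i => ~ In i I0) (seq 0 k)).
  assert (Hnodup : NoDup (used ++ free)).
  { apply NoDup_app.
    - apply NoDup_map_keep. rewrite <- map_map. exact HLi.
    - apply NoDup_keep, seq_NoDup.
    - intros i Hu Hf. apply In_keep in Hf as [_ Hf]. apply Hf.
      apply in_map_iff in Hu as [p [<- Hp]]. apply In_keep in Hp as [Hp _].
      unfold I0. rewrite map_map. apply (in_map (fun p => fst (fst p))), Hp. }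
  assert (Hmissing : forall i, In i (used ++ free) ->
            In i (seq 0 k) /\ forall v, Vs i v -> ~ ~ R v).
  { intros i Hi. apply in_app_or in Hi as [Hu|Hf].
    - apply in_map_iff in Hu as [p [<- Hp]]. apply In_keep in Hp as [Hp HR].
      destruct (HLp p Hp) as [Hk [Hv _]]. split; [apply in_seq; lia|].
      intros v Hv' HnR. apply HnR, (source_set_reachable _ _ Hk); auto.
      apply (reachable_succ _ _ (inl (snd (fst p)))); auto.
      simpl. apply in_map_iff. exists p. split; auto. destruct (fst p); auto.
    - apply In_keep in Hf as [Hs Hf]. apply in_seq in Hs.
      split; [apply in_seq; lia|]. intros v Hv HnR.
      apply HnR, (source_set_reachable i v); [lia| |auto]. apply reachable_free; auto. lia. }
  pose proof (NoDup_length_le_countP _ _ _ Hnodup Hmissing) as Hle.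
  unfold count_missing. fold (keep (fun i => forall v, Vs i v -> ~ ~ R v) (seq 0 k)).
  unfold used, free in Hle. rewrite length_keep. rewrite length_app, length_map, !length_keep in Hle.
  lia.
Qed.

Lemma sink_reachable :
  (forall X : V -> Prop, (exists x, X x) -> indeg_ge tail head arcs X (count_missing k Vs X)) ->
  length L < k -> R w.
Proof.
  intros Hcut Hlt. apply NNPP. intro Hw.
  destruct (Hcut (fun v => ~ R v)) as [l [Hln [Hll Hla]]]; [exists w; auto|].
  assert (Hback : forall e, In e (concat (map snd L)) -> R (head e) -> R (tail e)).
  { intros e He Hr. apply (reachable_succ _ _ _ _ Hr). exists e. right. auto. }
  assert (Hexits : forall a, In a l ->
            In a (concat (map snd L)) /\ (R (tail a) /\ ~ R (head a))).
  { intros a Ha. destruct (Hla a Ha) as [Harc [Ht Hh]]. apply NNPP in Ht.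
    split; [|auto]. apply NNPP. intro HaF. apply Hh.
    apply (reachable_succ _ _ _ _ Ht). exists a. left. auto. }
  pose proof (NoDup_length_le_countP _ _ _ Hln Hexits).
  pose proof (trail_exits_le L R HL Hback).
  pose proof (reachable_starts_lt_missing Hlt). lia.
Qed.

End Cut.

Lemma trail_system_of_length n :
  (forall X : V -> Prop, (exists x, X x) -> indeg_ge tail head arcs X (count_missing k Vs X)) ->
  n <= k -> exists L, trail_system L /\ length L = n.
Proof.
  intros Hcut. induction n as [|n IH]; intro Hn.
  - exists []. split; [split; [intros p []|split; constructor]|reflexivity].
  - destruct IH as [L [HL Hlen]]; [lia|].
    destruct (augment_system L HL) as [L' [HL' Hlen']].
    + apply (sink_reachable L HL Hcut). lia.
    + exists L'. split; auto. lia.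
Qed.

Definition linking_path (i : nat) (q : V * list A) : Prop :=
  is_path tail head arcs (fst q) (snd q) w /\ Vs i (fst q) /\
  (forall v, In v (pverts head (fst q) (snd q)) -> Vs i v -> v = fst q).

Definition linkage (P : nat -> V * list A) : Prop :=
  (forall i, i < k -> linking_path i (P i)) /\
  (forall i j, i < k -> j < k -> i <> j ->
     forall a, In a (snd (P i)) -> In a (snd (P j)) -> False).

Lemma path_of_trail_system L i :
  trail_system L -> length L = k -> i < k ->
  exists q p, In p L /\ fst (fst p) = i /\ linking_path i q /\ incl (snd q) (snd p).
Proof.
  intros [HL [HLi _]] Hlen Hi.
  assert (Hall : incl (seq 0 k) (map fst (map fst L))).
  { apply NoDup_length_incl; auto.
    - rewrite !length_map, length_seq. lia.
    - intros j Hj. rewrite map_map in Hj. apply in_map_iff in Hj as [p [<- Hp]].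
      apply in_seq. destruct (HL p Hp). lia. }
  assert (Hin : In i (map fst (map fst L))) by (apply Hall, in_seq; lia).
  rewrite map_map in Hin. apply in_map_iff in Hin as [p [<- Hp]].
  destruct (HL p Hp) as [_ [Hv Hw]].
  destruct (walk_to_path tail head _ _ _ _ Hw) as [es [Hpath Hincl]].
  destruct (path_from_last_visit tail head (Vs (fst (fst p))) _ _ _ _ Hpath)
    as [s' [es' [H1 [H2 [H3 H4]]]]].
  { exists (snd (fst p)). split; [left|]; auto. }
  exists (s', es'), p. split; [|split; [|split]]; auto.
  - split; auto.
  - intros a Ha. apply Hincl, H4, Ha.
Qed.

Lemma linkage_of_trail_system L :
  trail_system L -> length L = k -> exists P, linkage P.
Proof.
  intros HL Hlen.
  destruct (choice (fun i q => i < k ->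
              exists p, In p L /\ fst (fst p) = i /\ linking_path i q /\ incl (snd q) (snd p)))
    as [P HP].
  { intro i. destruct (Nat.lt_ge_cases i k) as [Hi|Hi].
    - destruct (path_of_trail_system L i HL Hlen Hi) as [q Hq]. exists q. auto.
    - exists (w, []). lia. }
  exists P. split.
  - intros i Hi. destruct (HP i Hi) as [p [_ [_ [Hq _]]]]. exact Hq.
  - intros i j Hi Hj Hij a Ha1 Ha2.
    destruct (HP i Hi) as [p1 [Hp1 [E1 [_ I1]]]], (HP j Hj) as [p2 [Hp2 [E2 [_ I2]]]].
    apply (NoDup_concat_disjoint snd L p1 p2 a (proj2 (proj2 HL)) Hp1 Hp2); auto.
    intros ->. congruence.
Qed.

End Linkage.

Theorem proposition3 (V A : Type) (tail head : A -> V) (k : nat)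
  (Vs : nat -> V -> Prop) (As : nat -> A -> Prop)
  (Hbr : forall i, i < k -> is_branching tail head (Vs i) (As i))
  (Hdisj : forall i j, i < k -> j < k -> i <> j -> forall a, As i a -> As j a -> False)
  (Hcut : forall X : V -> Prop, (exists x, X x) ->
     indeg_ge tail head (fun a => forall i, i < k -> ~ As i a) X (count_missing k Vs X)) :
  forall w : V, exists P : nat -> V * list A,
    (forall i, i < k ->
       is_path tail head (fun a => forall i', i' < k -> ~ As i' a) (fst (P i)) (snd (P i)) w /\
       Vs i (fst (P i)) /\
       (forall v, In v (pverts head (fst (P i)) (snd (P i))) -> Vs i v -> v = fst (P i))) /\
    (forall i j, i < k -> j < k -> i <> j ->
       forall a, In a (snd (P i)) -> In a (snd (P j)) -> False).
Proof.
  intro w.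
  destruct (trail_system_of_length tail head _ k Vs w k Hcut (le_n k)) as [L [HL Hlen]].
  exact (linkage_of_trail_system tail head _ k Vs w L HL Hlen).
Qed.
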